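(* Let $G=(V,E)$ be a (directed) graph with positive edge weights $w$ and source $s$ from which every vertex is reachable, with no two vertices equidistant from $s$. Run Dijkstra's algorithm on $(G,s,w)$ and, for each $x_i\in V\setminus\{s\}$, let $[a_i,b_i]$ be its timestamp interval. For each $x_i\in V\setminus\{s\}$ choose a real value $r_i\in[a_i,b_i]$. If all $r_i$ are distinct, then the sequence $L$ ordering all $x_i$ by $r_i$ is a linearization of $(G,s)$.
   Context: Dijkstra's algorithm with a min-heap $H$: set distance$[v]=\infty$ for all $v$, distance$[s]=0$, push $s$ with key $0$. While $H$ is nonempty: pop the minimum $u$, append it to the output, and for each edge $(u,v)$: if distance$[v]=\infty$, set distance$[v]=$distance$[u]+w(u,v)$ and push $v$ with that key; else if $v\in H$ and distance$[v]>$distance$[u]+w(u,v)$, update distance$[v]$ and decrease its key. Time is a counter, initially $0$, incremented after every \textsc{Push}; $a_i$ and $b_i$ are the times $x_i$ is pushed and popped. A linearization of $(G,s)$ is a permutation $L$ of $V\setminus\{s\}$ such that for some edge weighting $w'$ of $G$, $L$ is the order of the vertices of $V\setminus\{s\}$ by their shortest-path distance from $s$ under $w'$. *)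

From HB Require Import structures.
From mathcomp Require Import all_boot all_order all_algebra.
Set Implicit Arguments. Unset Strict Implicit. Unset Printing Implicit Defensive.
Import Order.TTheory GRing.Theory Num.Theory.
Local Open Scope ring_scope.

Section Dijkstra.
Variables (R : realFieldType) (V : finType).
(* Directed graph given by ordered adjacency lists: the edges are (u,v) with
   v \in adj u; adj u also fixes the order in which Dijkstra scans the edges
   out of u. *)
Variables (adj : V -> seq V) (w : V -> V -> R) (s : V).

Fixpoint pweight (wt : V -> V -> R) (x : V) (p : seq V) : R :=
  match p with
  | [::] => 0
  | y :: p' => wt x y + pweight wt y p'
  end.

Definition is_sp_dist (wt : V -> V -> R) (v : V) (d : R) : Prop :=
  (exists p, path (grel adj) s p /\ last s p = v /\ pweight wt s p = d) /\
  (forall p, path (grel adj) s p -> last s p = v -> d <= pweight wt s p).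

Definition linearization (L : seq V) : Prop :=
  perm_eq L (enum [pred x | x != s]) /\
  exists w' : V -> V -> R,
    (forall u v, v \in adj u -> 0 < w' u v) /\
    exists d : V -> R, (forall v, is_sp_dist w' v (d v)) /\
      sorted (fun x y => d x < d y) L.

(* State of Dijkstra's algorithm. dst v = None means distance infinity. *)
Record state := St {
  dst : V -> option R;
  heap : {set V};
  out : seq V;
  time : nat;
  pusht : V -> nat;    (* a: time at which a vertex was pushed *)
  popt : V -> nat      (* b: time at which a vertex was popped *)
}.

Definition upd {T : Type} (f : V -> T) (x : V) (y : T) : V -> T :=
  fun z => if z == x then y else f z.

Definition relax (u : V) (du : R) (st : state) (v : V) : state :=
  match dst st v with
  | None =>
      St (upd (dst st) v (Some (du + w u v))) (v |: heap st) (out st)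
         (time st).+1 (upd (pusht st) v (time st)) (popt st)
  | Some dv =>
      if (v \in heap st) && (du + w u v < dv) then
        St (upd (dst st) v (Some (du + w u v))) (heap st) (out st)
           (time st) (pusht st) (popt st)
      else st
  end.

(* one iteration of the while loop: pop a minimum u (any minimum, ties are
   broken arbitrarily), append it to the output, scan its out-edges in order *)
Inductive step : state -> state -> Prop :=
| StepPop st u du :
    u \in heap st -> dst st u = Some du ->
    (forall v, v \in heap st -> exists dv, dst st v = Some dv /\ du <= dv) ->
    step st (foldl (relax u du)
               (St (dst st) (heap st :\ u) (rcons (out st) u) (time st)
                   (pusht st) (upd (popt st) u (time st)))
               (adj u)).

Definition init_state : state :=
  St (fun v => if v == s then Some 0 else None) [set s] [::] 1
     (fun _ => 0%N) (fun _ => 0%N).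

Inductive dijkstra_run : state -> Prop :=
| RunInit : dijkstra_run init_state
| RunStep st st' : dijkstra_run st -> step st st' -> dijkstra_run st'.

End Dijkstra.

(* Every vertex v <> s is discovered while some in-neighbour u is being
   scanned, i.e. after u was popped, so b_u <= a_v and hence r_u < r_v.  Thus
   r, extended by r_s := 0, strictly increases along some in-edge into every
   vertex v <> s.  Any such potential d is the exact shortest-path distance
   for the positive weights w'(u,v) = d v - d u (or 1 where this is not
   positive): every path from s to v weighs at least d v, and following the
   increasing in-edges backwards from v gives a path of weight exactly d v. *)
From HB Require Import structures.
From mathcomp Require Import all_boot all_order all_algebra.
From mathcomp Require Import lra.
Set Implicit Arguments. Unset Strict Implicit. Unset Printing Implicit Defensive.
Import Order.TTheory GRing.Theory Num.Theory.
Local Open Scope ring_scope.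

Section Potential.
Variables (R : realFieldType) (V : finType) (adj : V -> seq V) (s : V).
Variable d : V -> R.

Definition potential_weight (u v : V) : R := if d u < d v then d v - d u else 1.

Lemma potential_weight_gt0 u v : 0 < potential_weight u v.
Proof. by rewrite /potential_weight; case: ifP => [|_]; rewrite ?subr_gt0. Qed.

Lemma pweight_rcons (wt : V -> V -> R) x p y :
  pweight wt x (rcons p y) = pweight wt x p + wt (last x p) y.
Proof. by elim: p x => [|z p IH] x /=; rewrite ?IH ?addrA // addr0 add0r. Qed.

Lemma potential_diff_le_pweight x p :
  d (last x p) - d x <= pweight potential_weight x p.
Proof.
elim: p x => [|y p IH] x /=; first by rewrite subrr.
have := IH y; rewrite /potential_weight; case: ifP => [_|/negbT]; first lra.
by rewrite -leNgt; lra.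
Qed.

Hypothesis d_increasing_in_edge :
  forall v, v != s -> exists2 u, v \in adj u & d u < d v.

Lemma potential_path v : exists p,
  [/\ path (grel adj) s p, last s p = v & pweight potential_weight s p = d v - d s].
Proof.
have [n] := ubnP #|[pred x | d x < d v]|; elim: n v => // n IH v.
rewrite ltnS => lt_below_v.
have [->|vs] := eqVneq v s; first by exists [::]; rewrite subrr.
have [u uv duv] := d_increasing_in_edge vs.
have [|p [sp last_p wp]] := IH u.
  apply: leq_trans lt_below_v; apply: proper_card; apply/properP; split.
    by apply/subsetP => x; rewrite !inE => /lt_trans; apply.
  by exists u; rewrite !inE ?ltxx.
exists (rcons p v); rewrite rcons_path last_rcons sp last_p /= uv.
by rewrite pweight_rcons wp last_p /potential_weight duv; split => //; lra.
Qed.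

Lemma potential_is_sp_dist v : d s = 0 -> is_sp_dist adj s potential_weight v (d v).
Proof.
move=> ds0; split.
  by have [p [? ? wp]] := potential_path v; exists p; rewrite wp ds0 subr0.
by move=> p _ <-; have := potential_diff_le_pweight s p; rewrite ds0 subr0.
Qed.

Lemma linearization_of_potential L :
  d s = 0 -> perm_eq L (enum [pred x | x != s]) ->
  sorted (fun x y => d x < d y) L -> @linearization R V adj s L.
Proof.
move=> ds0 permL sortedL; split=> //; exists potential_weight.
split=> [u v _|]; first exact: potential_weight_gt0.
by exists d; split=> // v; apply: potential_is_sp_dist.
Qed.

End Potential.

Section DijkstraInvariant.
Variables (R : realFieldType) (V : finType) (adj : V -> seq V) (w : V -> V -> R) (s : V).

Definition discovered (st : state R V) x : bool := isSome (dst st x).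

Record scan_extends (P : pred V) (st0 st : state R V) : Prop := ScanExtends {
  scan_old : forall x, discovered st0 x ->
    [/\ discovered st x, pusht st x = pusht st0 x & (x \in heap st) = (x \in heap st0)];
  scan_popt : popt st = popt st0;
  scan_time : (time st0 <= time st)%N;
  scan_new : forall x, discovered st x -> ~~ discovered st0 x ->
    [/\ P x, x \in heap st & (time st0 <= pusht st x)%N];
  scan_heap : forall x, x \in heap st -> (x \in heap st0) || discovered st x
}.

Lemma scan_extends_refl P st : scan_extends P st st.
Proof. by split=> // x ->. Qed.

Lemma scan_extends_trans P st1 st2 st3 :
  scan_extends P st1 st2 -> scan_extends P st2 st3 -> scan_extends P st1 st3.
Proof.
case=> old12 popt12 time12 new12 heap12 [old23 popt23 time23 new23 heap23].
split.
- move=> x /old12 [x2 <- <-]; exact: old23.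
- by rewrite popt23.
- exact: leq_trans time12 time23.
- move=> x x3 x1; case x2: (discovered st2 x).
    have [Px hx tx] := new12 x x2 x1; have [_ -> ->] := old23 x x2; by split.
  have [Px hx tx] := new23 x x3 (negbT x2); split=> //; exact: leq_trans tx.
- move=> x /heap23 /orP [/heap12 /orP [-> //|x2]|->]; last by rewrite orbT.
  by have [-> _ _] := old23 x x2; rewrite orbT.
Qed.

Lemma relax_discovered u du st v : discovered (relax w u du st v) v.
Proof.
rewrite /discovered /relax; case E: (dst st v) => [dv|]; last by rewrite /= /upd eqxx.
by case: ifP => _; rewrite /= ?/upd ?eqxx ?E.
Qed.

Lemma relax_scan_extends (P : pred V) u du st v :
  P v -> scan_extends P st (relax w u du st v).
Proof.
move=> Pv; rewrite /relax; case E: (dst st v) => [dv|].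
  case: ifP => _; last exact: scan_extends_refl.
  split=> //= [x xd|x|x ->//]; rewrite /discovered /upd /=.
    by split=> //; case: eqP.
  by case: eqP => [->|_ ->]; rewrite ?E.
split=> //= [x|x|x]; rewrite /discovered /upd /=.
- rewrite in_setU1; case: eqP => [->|//]; by rewrite E.
- by case: eqP => [->|_ ->]; rewrite ?setU11.
- by rewrite in_setU1; case: eqP => [_ _|_ /= ->]; rewrite ?orbT.
Qed.

Lemma scan_fold_extends (P : pred V) u du l st :
  all P l -> scan_extends P st (foldl (relax w u du) st l).
Proof.
elim: l st => [|v l IH] st /=; first by move=> _; exact: scan_extends_refl.
case/andP => Pv Pl; apply: scan_extends_trans (IH _ Pl).
exact: relax_scan_extends.
Qed.

Lemma scan_fold_discovered u du l st x :
  x \in l -> discovered (foldl (relax w u du) st l) x.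
Proof.
elim: l st => [|v l IH] st //=; rewrite in_cons => /orP [/eqP ->|/IH //].
have [old _ _ _ _] := scan_fold_extends u du (relax w u du st v) (all_predT l).
by have [] := old v (relax_discovered u du st v).
Qed.

Definition popped_parent (st : state R V) u v : Prop :=
  [/\ v \in adj u, u != v, discovered st u, u \notin heap st & (popt st u <= pusht st v)%N].

Record dijkstra_inv (st : state R V) : Prop := DijkstraInv {
  inv_source : discovered st s;
  inv_heap : forall x, x \in heap st -> discovered st x;
  inv_closed : forall x, discovered st x -> x \notin heap st ->
    forall y, y \in adj x -> discovered st y;
  inv_parent : forall v, v != s -> discovered st v ->
    (0 < pusht st v)%N /\ exists u, popped_parent st u v;
  inv_time : (0 < time st)%N
}.

Lemma dijkstra_inv_init : dijkstra_inv (init_state R s).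
Proof.
split=> //= [|x|x|v vs]; rewrite /discovered /= ?in_set1.
- by rewrite eqxx.
- by move=> /eqP ->; rewrite eqxx.
- by case: eqP => [->|]; rewrite ?eqxx.
- by rewrite (negbTE vs).
Qed.

Section Step.
Variables (st : state R V) (u : V) (du : R).
Hypotheses (inv : dijkstra_inv st) (u_heap : u \in heap st) (du_def : dst st u = Some du).

Let popped := St (dst st) (heap st :\ u) (rcons (out st) u) (time st) (pusht st)
                 (upd (popt st) u (time st)).
Let st' := foldl (relax w u du) popped (adj u).

Lemma step_scan_extends : scan_extends (mem (adj u)) popped st'.
Proof. by apply: scan_fold_extends; apply/allP. Qed.

Lemma step_old x : discovered st x ->
  [/\ discovered st' x, pusht st' x = pusht st x & (x \in heap st') = (x \in heap st :\ u)].
Proof. exact: (scan_old step_scan_extends). Qed.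

Lemma step_new x : discovered st' x -> ~~ discovered st x ->
  [/\ x \in adj u, x \in heap st' & (time st <= pusht st' x)%N].
Proof. exact: (scan_new step_scan_extends). Qed.

Lemma step_popt : popt st' = upd (popt st) u (time st).
Proof. exact: (scan_popt step_scan_extends). Qed.

Lemma u_discovered : discovered st u.
Proof. by rewrite /discovered du_def. Qed.

Lemma step_parent v : v != s -> discovered st' v ->
  (0 < pusht st' v)%N /\ exists u', popped_parent st' u' v.
Proof.
move=> vs v'; case vd: (discovered st v).
  have [_ pusht_v _] := step_old vd.
  have [pos [u0 [u0v u0_ne_v u0d u0h u0_le_v]]] := inv_parent inv vs vd.
  rewrite pusht_v; split=> //; exists u0; have [u0' _ u0h'] := step_old u0d.
  have u0u : u0 != u by apply: contraNneq u0h => ->.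
  split=> //; first by rewrite u0h' in_setD1 (negbTE u0h) andbF.
  by rewrite step_popt /upd (negbTE u0u) pusht_v.
have [uv vh' tv] := step_new v' (negbT vd).
split; first exact: leq_trans (inv_time inv) tv.
have [ud' _ uh'] := step_old u_discovered.
exists u; split=> //.
- by apply: contraNneq (negbT vd) => <-; apply: u_discovered.
- by rewrite uh' setD11.
- by rewrite step_popt /upd eqxx.
Qed.

Lemma step_closed x : discovered st' x -> x \notin heap st' ->
  forall y, y \in adj x -> discovered st' y.
Proof.
move=> x' xh; have [->|xu] := eqVneq x u; first by move=> y; apply: scan_fold_discovered.
case xd: (discovered st x); last by have [_ xh' _] := step_new x' (negbT xd); rewrite xh' in xh.
have [_ _ xh'] := step_old xd.
have xh0 : x \notin heap st by move: xh; rewrite xh' in_setD1 xu.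
by move=> y /(inv_closed inv xd xh0) /step_old [].
Qed.

Lemma dijkstra_inv_step : dijkstra_inv st'.
Proof.
split.
- by have [] := step_old (inv_source inv).
- move=> x /(scan_heap step_scan_extends) /orP [|//].
  by rewrite in_setD1 => /andP [_ /(inv_heap inv) /step_old []].
- exact: step_closed.
- exact: step_parent.
- exact: leq_trans (inv_time inv) (scan_time step_scan_extends).
Qed.

End Step.

Lemma dijkstra_inv_run st : dijkstra_run adj w s st -> dijkstra_inv st.
Proof.
elim=> [|st1 st2 _ IH hs]; first exact: dijkstra_inv_init.
by case: hs IH => {st1 st2} st u du u_heap du_def _ inv; apply: dijkstra_inv_step.
Qed.

Lemma final_all_discovered fin : dijkstra_inv fin -> heap fin = set0 ->
  (forall v, connect (grel adj) s v) -> forall v, discovered fin v.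
Proof.
move=> inv empty conn v; have /connectP [p sp ->] := conn v.
elim: p s (inv_source inv) sp => [//|y p IH] x xd /= /andP [xy /IH]; apply.
by apply: (inv_closed inv xd); rewrite // empty inE.
Qed.

Definition source_at_zero (r : V -> R) v : R := if v == s then 0 else r v.

Lemma timestamp_choice_increasing_in_edge fin (r : V -> R) :
  dijkstra_inv fin -> (forall v, discovered fin v) ->
  (forall x, x != s -> ((pusht fin x)%:R <= r x) && (r x <= (popt fin x)%:R)) ->
  {in [pred x | x != s] &, injective r} ->
  forall v, v != s -> exists2 u, v \in adj u & source_at_zero r u < source_at_zero r v.
Proof.
move=> inv all_disc r_interval r_inj v vs.
have [pos [u [uv u_ne_v _ _ u_before_v]]] := inv_parent inv vs (all_disc v).
exists u => //; rewrite /source_at_zero (negbTE vs).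
have /andP [pushed_v _] := r_interval v vs.
have [_|us] := eqVneq u s; first by apply: lt_le_trans pushed_v; rewrite ltr0n.
have /andP [_ popped_u] := r_interval u us.
rewrite lt_neqAle (le_trans popped_u (le_trans _ pushed_v)) ?ler_nat // andbT.
by apply: contra_neq u_ne_v => /r_inj; apply; rewrite inE.
Qed.

End DijkstraInvariant.

Theorem lemma7 (R : realFieldType) (V : finType) (adj : V -> seq V)
  (w : V -> V -> R) (s : V) :
  (forall u, uniq (adj u)) ->
  (forall u v, v \in adj u -> 0 < w u v) ->
  (forall v, connect (grel adj) s v) ->
  (forall u v d, is_sp_dist adj s w u d -> is_sp_dist adj s w v d -> u = v) ->
  forall fin : state R V, dijkstra_run adj w s fin -> heap fin = set0 ->
  forall r : V -> R,
    (forall x, x != s -> ((pusht fin x)%:R <= r x) && (r x <= (popt fin x)%:R)) ->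
    {in [pred x | x != s] &, injective r} ->
  forall L : seq V, perm_eq L (enum [pred x | x != s]) ->
    sorted (fun x y => r x < r y) L ->
    @linearization R V adj s L.
Proof.
(* Only the timestamps matter: the linearization comes with its own weights. *)
move=> _ _ conn _ fin run empty r r_interval r_inj L permL sortedL.
have inv := dijkstra_inv_run run.
have all_disc := final_all_discovered inv empty conn.
pose d := source_at_zero s r.
have d_in_edge := timestamp_choice_increasing_in_edge inv all_disc r_interval r_inj.
have sorted_d : sorted (fun x y => d x < d y) L.
  have L_ns : all [pred x | x != s] L.
    by apply/allP => x; rewrite (perm_mem permL) mem_enum.
  rewrite (eq_in_sorted (e' := fun x y => r x < r y) _ L_ns) //.
  by move=> x y /= xs ys; rewrite /d /source_at_zero (negbTE xs) (negbTE ys).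
have d_s : d s = 0 by rewrite /d /source_at_zero eqxx.
exact: (@linearization_of_potential R V adj s d d_in_edge L d_s permL sorted_d).
Qed.
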